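(* Let $K$ be a field equipped with $m$ commuting derivations $\Delta=\{\partial_1,\ldots,\partial_m\}$, all of which are identically zero on $K$, and let $K\{y\}$ be the ring of differential polynomials in one differential indeterminate $y$. For a polynomial $g=\sum_{j}c_jX^{\alpha_j}\in K[X_1,\ldots,X_m]$ (with $c_j\in K$, $\alpha_j\in\mathbb{N}^m$), define $\tilde g=\sum_j c_j\partial^{\alpha_j}y\in K\{y\}$. Let $f,f_1,\ldots,f_r\in K[X_1,\ldots,X_m]$ with $f\in(f_1,\ldots,f_r)$, let $G=\{\tilde f_1,\ldots,\tilde f_r\}$, and let $$k=\min\Big\{\max_{1\leqslant i\leqslant r}\deg g_i \;:\; g_1,\ldots,g_r\in K[X_1,\ldots,X_m],\ f=g_1f_1+\cdots+g_rf_r\Big\}.$$ Then $\tilde f\in (G)^{(k)}$, and, if $k\geqslant 1$, $\tilde f\notin (G)^{(k-1)}$.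
   Context: For $\alpha=(\alpha_1,\ldots,\alpha_m)\in\mathbb{N}^m$, $X^\alpha=X_1^{\alpha_1}\cdots X_m^{\alpha_m}$ and $\partial^\alpha=\partial_1^{\alpha_1}\cdots\partial_m^{\alpha_m}$, whose order is $\alpha_1+\cdots+\alpha_m$. The ring $K\{y\}$ is the polynomial ring over $K$ in the variables $\partial^\alpha y$, $\alpha\in\mathbb{N}^m$, with derivations $\partial_i(\partial^\alpha y)=\partial_i\partial^\alpha y$. For a subset $G\subseteq K\{y\}$ and an integer $j\geqslant 0$, $(G)^{(j)}$ denotes the ideal generated by all $\theta g$ with $g\in G$ and $\theta=\partial^\alpha$ of order at most $j$. $\deg$ denotes total degree. *)

From HB Require Import structures.
From mathcomp Require Import all_boot all_order all_algebra.
From mathcomp Require Import finmap.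
From mathcomp Require Import monalg.
From mathcomp Require Import mpoly.


Set Implicit Arguments.
Unset Strict Implicit.
Unset Printing Implicit Defensive.

Import GRing.Theory.
Local Open Scope ring_scope.

(* K{y} is the polynomial ring over K in the (infinitely many) variables
   d^alpha y, alpha in N^m; alpha is represented by a monomial 'X_{1..m}
   (an m-tuple of naturals), and the ring is the monoid algebra of the
   commutative monomials over these variables (multinomials' monalg). *)

Definition Ky (K : fieldType) (m : nat) :=
  monalg.malg (monalg.cmonom 'X_{1..m}) K.

Definition yvar (K : fieldType) (m : nat) (alpha : 'X_{1..m}) : Ky K m :=
  monalg.mkmalgU (monalg.ucm alpha) 1.

(* The derivation d_i on K{y}: zero on K, d_i (d^alpha y) = d^(alpha+e_i) y,
   extended by the Leibniz rule:
   d_i (c * prod_v v^(k v)) = c * sum_v (k v) * prod v^(k v - [v]) * d_i v. *)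
Definition dder (K : fieldType) (m : nat) (i : 'I_m) (p : Ky K m) : Ky K m :=
  \sum_(k <- monalg.msupp p)
     monalg.mcoeff k p *:
       \sum_(v <- finsupp (monalg.cmonom_val k))
          ((monalg.cmonom_val k v)%:R *
           (monalg.mkmalgU (monalg.divcm k (monalg.ucm v)) 1 *
            yvar K (v + U_(i))%MM)).

Definition dpow (K : fieldType) (m : nat) (beta : 'X_{1..m}) (p : Ky K m)
  : Ky K m :=
  foldr (fun i q => iter (beta i) (dder i) q) p (enum 'I_m).

Definition tilde (K : fieldType) (m : nat) (g : mpoly m K) : Ky K m :=
  \sum_(alpha <- msupp g) monalg.mkmalgU (monalg.ucm alpha) g@_alpha.

Definition in_ideal_gen (R : comRingType) (S : R -> Prop) (p : R) : Prop :=
  exists s : seq (R * R),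
    (forall x, x \in s -> S x.2) /\ p = \sum_(x <- s) x.1 * x.2.

Definition Gj (K : fieldType) (m r : nat) (G : 'I_r -> Ky K m) (j : nat)
  : Ky K m -> Prop :=
  in_ideal_gen (fun q => exists (i : 'I_r) (beta : 'X_{1..m}),
                          (mdeg beta <= j)%N /\ q = dpow beta (G i)).

(* total degree (the zero polynomial gets degree 0) *)
Definition tdeg (K : fieldType) (m : nat) (g : mpoly m K) : nat :=
  (msize g).-1.

Definition is_combination (K : fieldType) (m r : nat)
  (f : mpoly m K) (fs : 'I_r -> mpoly m K) (g : 'I_r -> mpoly m K) :=
  f = \sum_(i < r) g i * fs i.

Definition maxdeg (K : fieldType) (m r : nat) (g : 'I_r -> mpoly m K) :=
  (\max_(i < r) tdeg (g i))%N.

From HB Require Import structures.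
From mathcomp Require Import all_boot all_order all_algebra.
From mathcomp Require Import finmap.
From mathcomp Require Import monalg.
From mathcomp Require Import mpoly.

Set Implicit Arguments.
Unset Strict Implicit.
Unset Printing Implicit Defensive.

Import GRing.Theory.
Local Open Scope ring_scope.

(* Since the derivations vanish on K, a derivative [d^beta] maps the linear
   differential polynomial [g~] to [(X^beta g)~]: the map [g |-> g~] is an
   isomorphism of K[X]-modules from K[X] onto the linear part of K{y}, where
   X_i acts as d_i. Hence a representation [f = sum g_i f_i] with
   [deg g_i <= k] gives [f~] in [(G)^(k)] directly. Conversely, apply to a
   relation [f~ = sum a_x d^beta_x f~_(i_x)] the projection [untilde] onto the
   linear part, which is K-linear and maps [A * g~] to [A(0) g], where [A(0)]
   is the constant term of A: it yields [f = sum a_x(0) X^beta_x f_(i_x)]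
   with [deg <= ord d^beta_x], so by minimality of k every relation needs
   derivatives of order k. *)

Section LinearExtension.
Variables (M : choiceType) (R : nzRingType) (V : lmodType R) (h : M -> V).

Definition mlinext (g : {malg R[M]}) : V :=
  \sum_(k <- monalg.msupp g) monalg.mcoeff k g *: h k.

Lemma mlinextEw g (d : {fset M}) : (monalg.msupp g `<=` d)%fset ->
  mlinext g = \sum_(k <- d) monalg.mcoeff k g *: h k.
Proof.
move=> sub; rewrite /mlinext (big_fset_incl _ sub) // => k _ kn.
by rewrite mcoeff_outdom // scale0r.
Qed.

Lemma mlinextD g1 g2 : mlinext (g1 + g2) = mlinext g1 + mlinext g2.
Proof.
pose d := (monalg.msupp g1 `|` monalg.msupp g2 `|` monalg.msupp (g1 + g2))%fset.
rewrite (@mlinextEw _ d); last by rewrite /d fsubsetUr.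
rewrite (@mlinextEw g1 d); last by rewrite /d -fsetUA fsubsetUl.
rewrite (@mlinextEw g2 d); last by rewrite /d fsetUC fsetUA fsubsetUr.
by rewrite -big_split; apply: eq_bigr => k _; rewrite monalg.mcoeffD scalerDl.
Qed.

Lemma mlinext0 : mlinext 0 = 0.
Proof. by rewrite /mlinext monalg.msupp0 big_seq_fset0. Qed.

Lemma mlinext_sum (I : Type) (s : seq I) (F : I -> {malg R[M]}) :
  mlinext (\sum_(i <- s) F i) = \sum_(i <- s) mlinext (F i).
Proof. exact: (big_morph _ mlinextD mlinext0). Qed.

Lemma mlinextU c k : mlinext << c *g k >> = c *: h k.
Proof. by rewrite (mlinextEw msuppU_le) big_seq_fset1 mcoeffUU. Qed.

End LinearExtension.

Lemma scale_malgU (M : choiceType) (R : nzRingType) (c x : R) (k : M) :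
  c *: << x *g k >> = << c * x *g k >> :> {malg R[M]}.
Proof. by apply/malgP => k'; rewrite monalg.mcoeffZ !monalg.mcoeffU mulrnAr. Qed.

Section LinearPart.
Variables (I : choiceType) (R : comNzRingType) (V : lmodType R) (X : I -> V).

Definition linpart : {malg R[cmonom I]} -> V :=
  mlinext (fun k => if monalg.mdeg k == 1%N then \sum_(a <- finsupp k) X a else 0).

Lemma linpartU c a : linpart << c *g ucm a >> = c *: X a.
Proof. by rewrite /linpart mlinextU monalg.mdegU eqxx mdomU big_seq_fset1. Qed.

Lemma linpart_mulU (A : {malg R[cmonom I]}) c a :
  linpart (A * << c *g ucm a >>) = (monalg.mcoeff (mone : cmonom I) A * c) *: X a.
Proof.
have single_var k : (if k == mone then \sum_(b <- finsupp (mmul k (ucm a))) X b else 0)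
                     = X a *+ (k == mone :> cmonom I).
  by case: eqP => [->|_]; rewrite ?mul1m ?mdomU ?big_seq_fset1.
rewrite {1}(monalgE A) mulr_suml /linpart mlinext_sum.
under eq_bigr => k _.
  rewrite malgM_def fgmulUU mlinextU monalg.mdegM monalg.mdegU addn1 eqSS.
  rewrite monalg.mdeg_eq0 single_var -scalerMnr scalerMnl.
over.
rewrite -scaler_suml; congr (_ *: _).
rewrite [in RHS](monalgE A) (big_morph _ (monalg.mcoeffD _) (monalg.mcoeff0 _)) mulr_suml.
by apply: eq_bigr => k _; rewrite monalg.mcoeffU mulrnAl.
Qed.

End LinearPart.

Section IdealGen.
Variables (R : comRingType) (S : R -> Prop).

Lemma in_ideal_gen0 : in_ideal_gen S 0.
Proof. by exists [::]; rewrite big_nil. Qed.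

Lemma in_ideal_genD p q :
  in_ideal_gen S p -> in_ideal_gen S q -> in_ideal_gen S (p + q).
Proof.
move=> [s1 [S1 ->]] [s2 [S2 ->]]; exists (s1 ++ s2); rewrite big_cat.
by split=> // x; rewrite mem_cat => /orP[/S1|/S2].
Qed.

Lemma in_ideal_genMl a x : S x -> in_ideal_gen S (a * x).
Proof.
by move=> Sx; exists [:: (a, x)]; rewrite big_seq1; split=> // y /[1!inE] /eqP->.
Qed.

Lemma in_ideal_gen_sum (I : Type) (s : seq I) (P : pred I) (F : I -> R) :
  (forall i, P i -> in_ideal_gen S (F i)) ->
  in_ideal_gen S (\sum_(i <- s | P i) F i).
Proof.
by move=> SF; apply: big_ind => //; [apply: in_ideal_gen0 | apply: in_ideal_genD].
Qed.

End IdealGen.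

Lemma big_msupp_widen (n : nat) (R : nzRingType) (V : zmodType) (p : mpoly n R)
    (s : seq 'X_{1..n}) (F : 'X_{1..n} -> R -> V) :
  uniq s -> {subset msupp p <= s} -> (forall a, F a 0 = 0) ->
  \sum_(a <- msupp p) F a p@_a = \sum_(a <- s) F a p@_a.
Proof.
move=> uniq_s sub F0; rewrite [RHS](bigID (mem (msupp p))) /=.
rewrite [X in _ + X]big1 ?addr0 => [|a /memN_msupp_eq0 ->//].
rewrite -(big_filter s); apply: perm_big.
apply: uniq_perm; rewrite ?filter_uniq ?msupp_uniq //.
by move=> a; rewrite mem_filter; case: (boolP (a \in msupp p)) => //= /sub.
Qed.

Section Tilde.
Variables (K : fieldType) (m : nat).
Implicit Types (p h : mpoly m K) (a b : 'X_{1..m}).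

Lemma tildeE p : tilde p = \sum_(a <- msupp p) << p@_a *g ucm a >>.
Proof. by []. Qed.

Lemma tilde0 : tilde (0 : mpoly m K) = 0.
Proof. by rewrite tildeE msupp0 big_nil. Qed.

Lemma tildeD p q : tilde (p + q) = tilde p + tilde q.
Proof.
pose s := undup (msupp p ++ msupp q ++ msupp (p + q)).
pose F a (c : K) : Ky K m := << c *g ucm a >>.
have uniq_s : uniq s := undup_uniq _.
have F0 a : F a 0 = 0 by rewrite /F monalgU0.
have sub t : {subset msupp t <= msupp p ++ msupp q ++ msupp (p + q)} ->
    \sum_(a <- msupp t) F a t@_a = \sum_(a <- s) F a t@_a.
  by move=> sub_t; apply: big_msupp_widen => // a /sub_t; rewrite mem_undup.
rewrite !tildeE -/F !sub => [|a Ha|a Ha|a Ha]; rewrite ?mem_cat ?Ha ?orbT //.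
by rewrite -big_split; apply: eq_bigr => a _; rewrite /F mcoeffD monalgUD.
Qed.

Lemma tildeZ c p : tilde (c *: p) = c *: tilde p.
Proof.
pose F a (d : K) : Ky K m := << d *g ucm a >>.
have supp_cp := @msuppZ_le _ _ c p.
rewrite !tildeE (@big_msupp_widen _ _ _ _ _ F (msupp_uniq p) supp_cp).
  by rewrite scaler_sumr; apply: eq_bigr => a _; rewrite /F mcoeffZ scale_malgU.
by move=> a; rewrite /F monalgU0.
Qed.

Lemma tilde_sum (I : Type) (s : seq I) (F : I -> mpoly m K) :
  tilde (\sum_(i <- s) F i) = \sum_(i <- s) tilde (F i).
Proof. exact: (big_morph _ tildeD tilde0). Qed.

Lemma tilde_mulX b h :
  tilde ('X_[b] * h) = \sum_(a <- msupp h) << h@_a *g ucm (a + b)%MM >>.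
Proof.
rewrite {1}(mpolyE h) mulr_sumr tilde_sum; apply: eq_bigr => a _.
rewrite -scalerAr -mpolyXD tildeZ tildeE msuppX big_seq1 mcoeffX eqxx.
by rewrite scale_malgU mulr1 addmC.
Qed.

Definition dder_mon (i : 'I_m) (k : cmonom 'X_{1..m}) : Ky K m :=
  \sum_(v <- finsupp (cmonom_val k))
     ((cmonom_val k v)%:R * (<< divcm k (ucm v) >> * yvar K (v + U_(i))%MM)).

Lemma dderE i : dder i =1 mlinext (dder_mon i).
Proof. by []. Qed.

Lemma dder_monU i a : dder_mon i (ucm a) = yvar K (a + U_(i))%MM.
Proof.
rewrite /dder_mon mdomU big_seq_fset1 cmUU mul1r.
have -> : divcm (ucm a) (ucm a) = mone by apply/eqP/cmP => j; rewrite divcmE onecmE subnn.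
exact: mul1r.
Qed.

Lemma dderU i a c :
  dder i (<< c *g ucm a >> : Ky K m) = << c *g ucm (a + U_(i))%MM >>.
Proof. by rewrite dderE mlinextU dder_monU scale_malgU mulr1. Qed.

Lemma dder_sum i (I : Type) (s : seq I) (F : I -> Ky K m) :
  dder i (\sum_(j <- s) F j) = \sum_(j <- s) dder i (F j).
Proof. by rewrite !dderE mlinext_sum; under eq_bigr do rewrite -dderE. Qed.

Lemma dder_tilde_mulX i b h :
  dder i (tilde ('X_[b] * h)) = tilde ('X_[b + U_(i)] * h).
Proof. by rewrite !tilde_mulX dder_sum; apply: eq_bigr => a _; rewrite dderU addmA. Qed.

Lemma iter_dder_tilde_mulX i n b h :
  iter n (dder i) (tilde ('X_[b] * h)) = tilde ('X_[b + U_(i) *+ n] * h).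
Proof.
elim: n => [|n IHn]; first by rewrite mulm0n (addm0 b).
rewrite iterS IHn dder_tilde_mulX (mulmSr U_(i)%MM n) (addmA b).
reflexivity.
Qed.

Lemma dpow_tilde beta h : dpow beta (tilde h) = tilde ('X_[beta] * h).
Proof.
have fold_iter s b :
    foldr (fun i q => iter (beta i) (dder i) q) (tilde ('X_[b] * h)) s
    = tilde ('X_[b + \sum_(i <- s) U_(i) *+ beta i] * h).
  elim: s => [|i s IHs] /=; first by rewrite big_nil addm0.
  rewrite IHs iter_dder_tilde_mulX big_cons (addmC (U_(i) *+ beta i)%MM) addmA.
  reflexivity.
rewrite -[h in LHS]mul1r -mpolyX0 /dpow fold_iter add0m.
congr (tilde ('X_[_] * h)); apply/mnmP => j.
by rewrite mnm_sumE big_enum -mnm_sumE -multinomUE_id.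
Qed.

End Tilde.

Section Untilde.
Variables (K : fieldType) (m : nat).
Implicit Types (p h : mpoly m K).

Definition untilde : Ky K m -> mpoly m K := linpart (fun a => 'X_[a]).

Lemma untildeD (P Q : Ky K m) : untilde (P + Q) = untilde P + untilde Q.
Proof. exact: mlinextD. Qed.

Lemma untilde_tilde h : untilde (tilde h) = h.
Proof.
rewrite tildeE /untilde /linpart mlinext_sum [RHS](mpolyE h).
by apply: eq_bigr => a _; apply: linpartU.
Qed.

Lemma untilde_mul_tilde (A : Ky K m) h :
  untilde (A * tilde h) = monalg.mcoeff (mone : cmonom 'X_{1..m}) A *: h.
Proof.
rewrite tildeE mulr_sumr /untilde /linpart mlinext_sum [in RHS](mpolyE h) scaler_sumr.
by apply: eq_bigr => a _; rewrite scalerA; apply: linpart_mulU.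
Qed.

Lemma tdeg_leqE p j : (tdeg p <= j)%N = (msize p <= j.+1)%N.
Proof. by rewrite /tdeg; case: (msize p). Qed.

Lemma Gj_tilde_comb r j (fs g : 'I_r -> mpoly m K) :
  (forall i, (tdeg (g i) <= j)%N) ->
  Gj (fun i => tilde (fs i)) j (tilde (\sum_i g i * fs i)).
Proof.
move=> deg_g; rewrite tilde_sum; apply: in_ideal_gen_sum => i _.
rewrite {1}(mpolyE (g i)) mulr_suml tilde_sum big_seq.
apply: in_ideal_gen_sum => a supp_a.
rewrite -scalerAl tildeZ -dpow_tilde -[dpow _ _]mul1r scalerAl.
apply: in_ideal_genMl; exists i, a; split=> //.
by rewrite -ltnS (leq_trans (msize_mdeg_lt supp_a)) // -tdeg_leqE.
Qed.

Lemma Gj_untilde r j (fs : 'I_r -> mpoly m K) (P : Ky K m) :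
  Gj (fun i => tilde (fs i)) j P ->
  exists g : 'I_r -> mpoly m K,
    (forall i, (tdeg (g i) <= j)%N) /\ untilde P = \sum_i g i * fs i.
Proof.
case=> s [gen_s ->] {P}; elim: s gen_s => [|[a q] s IHs] gen_s.
  exists (fun _ => 0); split=> [i|]; first by rewrite tdeg_leqE msize0.
  by rewrite big_nil big1 /untilde /linpart ?mlinext0 // => i _; rewrite mul0r.
have [|g [deg_g IHg]] := IHs; first by move=> y s_y; apply: gen_s; rewrite inE s_y orbT.
have [i0 [beta [deg_beta /= q_eq]]] := gen_s (a, q) (mem_head _ _).
pose c := monalg.mcoeff (mone : cmonom 'X_{1..m}) a.
exists (fun i => g i + (i == i0)%:R * (c *: 'X_[beta])); split=> [i|].
  rewrite tdeg_leqE (leq_trans (msizeD_le _ _)) // geq_max -tdeg_leqE deg_g.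
  case: eqP => _; rewrite ?mul0r ?msize0 // mul1r (leq_trans (msizeZ_le _ _)) //.
  by rewrite msizeX ltnS.
rewrite big_cons untildeD IHg /=.
rewrite q_eq dpow_tilde untilde_mul_tilde -/c [LHS]addrC.
under [RHS]eq_bigr do rewrite mulrDl; rewrite big_split /=; congr (_ + _).
under eq_bigr do rewrite -mulrA mulr_natl mulrb.
by rewrite -big_mkcond big_pred1_eq scalerAl.
Qed.

End Untilde.

Theorem theorem4p3 (K : fieldType) (m r : nat)
  (f : mpoly m K) (fs : 'I_r -> mpoly m K) (k : nat) :
  (* f lies in the ideal (f_1, ..., f_r) *)
  (exists g : 'I_r -> mpoly m K, is_combination f fs g) ->
  (* k is the minimum of max_i deg g_i over all representations *)
  (exists g : 'I_r -> mpoly m K, is_combination f fs g /\ maxdeg g = k) ->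
  (forall g : 'I_r -> mpoly m K, is_combination f fs g -> (k <= maxdeg g)%N) ->
  Gj (fun i => tilde (fs i)) k (tilde f) /\
  ((1 <= k)%N -> ~ Gj (fun i => tilde (fs i)) k.-1 (tilde f)).
Proof.
move=> _ [g [f_eq <-]] k_min; split.
  rewrite f_eq; apply: Gj_tilde_comb => i.
  exact: (leq_bigmax (F := fun i => tdeg (g i))).
move=> k_gt0 /Gj_untilde [g' [deg_g' comb_g']].
have /k_min le_g_g' : is_combination f fs g'.
  by rewrite /is_combination -comb_g' untilde_tilde.
have le_g'_pred : (maxdeg g' <= (maxdeg g).-1)%N.
  by apply/bigmax_leqP => i _; apply: deg_g'.
have := leq_trans le_g_g' le_g'_pred.
by case: (maxdeg g) k_gt0 => // n _; rewrite ltnn.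
Qed.
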